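(* Let $h\in\mathbb{N}$, $b>0$ and $m>hb$. Suppose $\nu$ is a $b$-balanced product probability measure on $[m]^n$ and $\mathcal{F}_1,\dots,\mathcal{F}_h\subset[m]^n$ satisfy $\prod_{j=1}^h\nu(\mathcal{F}_j)>2^hb/(m-hb)$. Then $\mathcal{F}_1,\dots,\mathcal{F}_h$ cross contain an $h$-matching, i.e. there are $x^j\in\mathcal{F}_j$ ($j\in[h]$) such that for all distinct $j,j'\in[h]$ there is no $i\in[n]$ with $x^j_i=x^{j'}_i$.
   Context: A product measure $\nu=\prod_{i=1}^n\nu_i$ on $[m]^n$ is $b$-balanced if $\nu_i(x)\le b/m$ for all $i\in[n]$ and $x\in[m]$. *)

From mathcomp Require Import all_boot all_order all_algebra.
Set Implicit Arguments. Unset Strict Implicit. Unset Printing Implicit Defensive.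
Import Order.TTheory GRing.Theory Num.Theory.
Local Open Scope ring_scope.

(* Points of [m]^n are finite functions 'I_n -> 'I_m. A product measure on
   [m]^n is given by its coordinate marginals nu i : 'I_m -> R. *)
Definition point (m n : nat) := {ffun 'I_n -> 'I_m}.

Definition is_prob_marginals (R : realFieldType) (m n : nat)
  (nu : 'I_n -> 'I_m -> R) : Prop :=
  forall i : 'I_n, (forall x, 0 <= nu i x) /\ \sum_(x < m) nu i x = 1.

Definition balanced (R : realFieldType) (m n : nat) (b : R)
  (nu : 'I_n -> 'I_m -> R) : Prop :=
  forall (i : 'I_n) (x : 'I_m), nu i x <= b / m%:R.

Definition prod_measure (R : realFieldType) (m n : nat)
  (nu : 'I_n -> 'I_m -> R) (F : {set point m n}) : R :=
  \sum_(x in F) \prod_(i < n) nu i (x i).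

Definition cross_matching (m n h : nat) (F : 'I_h -> {set point m n}) : Prop :=
  exists x : 'I_h -> point m n,
    (forall j, x j \in F j) /\
    (forall j j' : 'I_h, j != j' -> forall i : 'I_n, x j i != x j' i).

From mathcomp Require Import all_boot all_order all_algebra.
From mathcomp Require Import ring lra zify.
Set Implicit Arguments. Unset Strict Implicit. Unset Printing Implicit Defensive.
Import Order.TTheory GRing.Theory Num.Theory.
Local Open Scope ring_scope.

(* Induction on the number [n] of coordinates.  Let [p] be the first marginal
   and [f j a] the measure of the slice of [F j] at first coordinate [a], so
   that [nu (F j)] is the [p]-mean of [f j].  If [p <= beta] and every
   [nu (F j)] exceeds [h beta / (1 - (h - 1) beta)], there are pairwise
   distinct [a j] with [prod_j f j (a j) >= prod_j nu (F j)]: take the pair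
   [(k, c)] maximising [f k c / nu (F k)], set [a k = c], delete [c] and
   renormalise [p], and recurse on the other families; the maximality of
   that ratio pays for the factor [(1 - p c)^(h-1)] lost in renormalising.  So
   the product of the measures never decreases as the coordinates are fixed
   one by one, and it stays above [2^h b / (m - h b)], which is exactly what
   keeps every [nu (F j)] above the threshold with [beta = b / m]. *)

Lemma sqn_lt_exp2Dn h : (h * h < 2 ^ h + h)%N.
Proof.
have double_le h' : (2 * h' <= 2 ^ h')%N.
  by case: h' => // h'; rewrite expnS leq_mul2l ltn_expl.
by elim: h => // h IH; have := double_le h; rewrite expnS; nia.
Qed.

Section RealInequalities.
Variable R : realFieldType.

Lemma onesub_sum_le_prod h (x : 'I_h -> R) :
  (forall j, 0 <= x j <= 1) -> 1 - \sum_(j < h) x j <= \prod_(j < h) (1 - x j).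
Proof.
elim: h x => [|h IH] x x01; first by rewrite !big_ord0 subr0.
rewrite big_ord_recr big_ord_recr /=.
have := IH (fun j => x (widen_ord (leqnSn h) j)) (fun j => x01 _).
set P := \prod_(_ < _) _; set S := \sum_(_ < _) _ => le_SP.
have S_ge0 : 0 <= S by apply: sumr_ge0 => j _; case/andP: (x01 (widen_ord (leqnSn h) j)).
case/andP: (x01 ord_max) => x0 x1.
nra.
Qed.

Lemma subrXX_le n (a b : R) : 0 <= b <= a ->
  a ^+ n.+1 - b ^+ n.+1 <= (a - b) * (n.+1%:R * a ^+ n).
Proof.
case/andP=> b0 ba; rewrite subrXX; apply: ler_wpM2l; first by rewrite subr_ge0.
apply: (@le_trans _ _ (\sum_(i < n.+1) a ^+ n)); last first.
  by rewrite sumr_const card_ord mulr_natl.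
apply: ler_sum => i _ /=.
have a0 : 0 <= a by apply: le_trans ba.
have bXa : b ^+ i <= a ^+ i by rewrite lerXn2r ?nnegrE.
by apply: le_trans (ler_wpM2l (exprn_ge0 _ a0) bXa) _; rewrite -exprD subnK ?leq_ord.
Qed.

Lemma ler_mul_onesubX n (x y : R) : 0 <= y <= x -> x * n.+1%:R <= 1 ->
  y * (1 - y) ^+ n <= x * (1 - x) ^+ n.
Proof.
elim: n x y => [|n IH] x y /andP[y0 yx] xn; first by rewrite !expr0 !mulr1.
have x0 : 0 <= x := le_trans y0 yx.
move: xn; rewrite -natr1 mulrDr mulr1; set N := n.+1%:R in IH * => xn.
have xN0 : 0 <= x * N by rewrite mulr_ge0.
have ux : 0 <= 1 - x by lra.
have {}IH : y * (1 - y) ^+ n <= x * (1 - x) ^+ n by apply: IH; [rewrite y0 yx | lra].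
have uv : 0 <= 1 - x <= 1 - y by rewrite ux lerB.
have xy0 : 0 <= x - y by rewrite subr_ge0.
(* With [u = 1 - x], [v = 1 - y]: [y v^n.+1 <= y u^n.+1 + N (x - y) y v^n
   <= y u^n.+1 + N (x - y) x u^n <= x u^n.+1], the last step by [N x <= u]. *)
have := ler_wpM2l y0 (subrXX_le n uv); rewrite -/N.
have := ler_wpM2l (mulr_ge0 xy0 (ler0n R n.+1)) IH; rewrite -/N.
have U0 : 0 <= (1 - x) ^+ n by apply: exprn_ge0.
have xN : x * N <= 1 - x by lra.
have := ler_wpM2l (mulr_ge0 xy0 U0) xN; rewrite !exprS.
lra.
Qed.

(* One step of the distinct-choice argument: [s] is the mass of the chosen
   value, [r >= 1] its maximal density ratio, and the [pi j] the shares of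
   the remaining families at that value. *)
Lemma expr_onesub_le_mul_prod h (s r : R) (pi : 'I_h -> R) :
  0 < s -> 1 <= r -> s * h.+1%:R ^+ 2 <= 1 ->
  (forall j, 0 <= pi j <= r * s) -> r * s + \sum_(j < h) pi j <= 1 ->
  (1 - s) ^+ h <= r * \prod_(j < h) (1 - pi j).
Proof.
move=> s0 r1 sh pi_bd sum_le; set t := r * s in pi_bd sum_le *.
have st : s <= t by rewrite /t ler_peMl // ltW.
have t1 : t <= 1.
  have : 0 <= \sum_(j < h) pi j by apply: sumr_ge0 => j _; case/andP: (pi_bd j).
  lra.
have pi01 j : 0 <= pi j <= 1.
  by case/andP: (pi_bd j) => -> /le_trans ->.
have H0 : (0 : R) < h.+1%:R by rewrite ltr0n.
case: (lerP (t * h.+1%:R) 1) => [t_small | t_large].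
  have le_tpi : (1 - t) ^+ h <= \prod_(j < h) (1 - pi j).
    rewrite -[h in X in X <= _]card_ord -prodr_const; apply: ler_prod => j _.
    by case/andP: (pi_bd j) => _ pit; rewrite subr_ge0 t1 lerB.
  rewrite -(ler_pM2l s0); apply: le_trans (ler_mul_onesubX _ t_small) _.
    by rewrite (ltW s0).
  by rewrite mulrA [s * r]mulrC -/t ler_wpM2l // (le_trans (ltW s0) st).
have le_Wpi := onesub_sum_le_prod pi01.
have rt1 : 1 <= r * t.
  have tH : 1 < (t * h.+1%:R) ^+ 2 by rewrite expr_gt1 // ltW // (lt_trans ltr01).
  have s_tt : s < t * t.
    rewrite -(ltr_pM2r (exprn_gt0 2 H0)); apply: le_lt_trans sh _.
    by rewrite -expr2 -exprMn.
  by apply: ltW; rewrite -(ltr_pM2l s0) mulr1 mulrA [s * r]mulrC.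
have us : (1 - s) ^+ h <= 1 by apply: exprn_ile1; lra.
apply: le_trans us _; apply: le_trans rt1 _; rewrite ler_wpM2l ?(le_trans ler01 r1) //.
lra.
Qed.

(* Deleting
   a value of mass at most [beta] and renormalising lowers a mean by at most
   [beta] and turns the bound [beta] into [beta / (1 - beta)]; the threshold is
   chosen so that it then still holds for one family less. *)
Definition above_threshold h (beta x : R) :=
  h%:R * beta <= x * (1 - (h%:R - 1) * beta).

Lemma above_threshold_le h (beta x y : R) :
  0 <= beta -> beta * (h%:R ^+ 2 + 1) <= 1 -> x <= y ->
  above_threshold h beta x -> above_threshold h beta y.
Proof.
rewrite /above_threshold => b0 bh xy thr; apply: le_trans thr _; apply: ler_wpM2r xy.
have le_h : h%:R - 1 <= h%:R ^+ 2 + 1 :> R.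
  have : (h <= h ^ 2 + 2)%N by rewrite -mulnn; nia.
  by rewrite -(ler_nat R) natrD natrX => ?; lra.
have := ler_wpM2l b0 le_h; rewrite subr_ge0; move: bh.
rewrite mulrC; lra.
Qed.

Lemma above_threshold_ge h (beta x : R) :
  0 <= beta -> beta * h%:R < 1 -> above_threshold h.+1 beta x -> h.+1%:R * beta <= x.
Proof.
rewrite /above_threshold -natr1 addrK => b0 bh thr.
have hb0 : 0 <= h%:R * beta by rewrite mulr_ge0.
have x0 : 0 <= x by nra.
nra.
Qed.

Lemma above_threshold_delete h (beta s x y : R) :
  0 < beta -> beta * h.+1%:R < 1 -> 0 <= s <= beta -> 0 <= y <= 1 ->
  above_threshold h.+1 beta x ->
  above_threshold h (beta / (1 - beta)) ((x - s * y) / (1 - s)).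
Proof.
move=> b0 bh /andP[s0 sb] /andP[y0 y1] thr.
have bh' : beta * h%:R < 1 by apply: le_lt_trans bh; rewrite ler_pM2l // ler_nat.
have xb := above_threshold_ge (ltW b0) bh' thr.
move: thr bh; rewrite /above_threshold -!natr1 addrK => thr; rewrite mulrDr mulr1 => bh.
have hb0 : 0 <= h%:R * beta by rewrite mulr_ge0 // ltW.
have c0 : 0 < 1 - h%:R * beta by lra.
have b1 : 0 < 1 - beta by lra.
have s1 : 0 < 1 - s by lra.
have ge_sub : x - beta <= (x - s * y) / (1 - s).
  have xb' : beta <= x by apply: le_trans xb; rewrite ler_peMl ?ler1n // ltW.
  rewrite ler_pdivlMr //.
  have : 0 <= s * (x - beta) by rewrite mulr_ge0 // subr_ge0.
  have : 0 <= s * (1 - y) by rewrite mulr_ge0 // subr_ge0.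
  lra.
rewrite (_ : 1 - _ = (1 - h%:R * beta) / (1 - beta)); last by field; rewrite gt_eqF.
rewrite !mulrA ler_pM2r ?invr_gt0 //.
apply: le_trans (ler_wpM2r (ltW c0) ge_sub); nra.
Qed.

Lemma sqS_bound_mulS_lt1 h (beta : R) :
  0 <= beta -> beta * (h.+1%:R ^+ 2 + 1) <= 1 -> beta * h.+1%:R < 1.
Proof.
move=> b0 bh; have [->|b_neq0] := eqVneq beta 0; first by rewrite mul0r ltr01.
have b_gt0 : 0 < beta by rewrite lt0r b_neq0.
have H_sq : h.+1%:R <= h.+1%:R ^+ 2 :> R by rewrite -natrX ler_nat -mulnn leq_pmulr.
have := ler_wpM2l b0 H_sq; move: bh; rewrite mulrDr mulr1.
lra.
Qed.

Lemma sqS_bound_renorm h (beta : R) : 0 <= beta -> beta * (h.+1%:R ^+ 2 + 1) <= 1 ->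
  beta / (1 - beta) * (h%:R ^+ 2 + 1) <= 1.
Proof.
move=> b0 bh; have bH1 := sqS_bound_mulS_lt1 b0 bh.
have b1 : 0 < 1 - beta.
  by rewrite subr_gt0; apply: le_lt_trans bH1; rewrite ler_peMr // ler1n.
rewrite mulrAC ler_pdivrMr // mul1r.
have : (h ^ 2 + 2 <= h.+1 ^ 2 + 1)%N by rewrite -!mulnn; nia.
rewrite -(ler_nat R) !natrD !natrX => le_h; move: bh.
have := ler_wpM2l b0 le_h.
lra.
Qed.

Lemma exp2_threshold h (beta : R) :
  0 < beta -> h%:R * beta < 1 -> 2 ^+ h * beta / (1 - h%:R * beta) < 1 ->
  [/\ 0 <= 2 ^+ h * beta / (1 - h%:R * beta), beta * (h%:R ^+ 2 + 1) <= 1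
    & above_threshold h beta (2 ^+ h * beta / (1 - h%:R * beta))].
Proof.
move=> b_gt0 hb C_lt1; set C := _ / _ in C_lt1 *.
have C_eq : C * (1 - h%:R * beta) = 2 ^+ h * beta.
  by rewrite /C divfK // gt_eqF // subr_gt0.
have C_ge0 : 0 <= C by rewrite divr_ge0 ?mulr_ge0 ?exprn_ge0 // ltW // subr_gt0.
have h_le : h%:R <= 2 ^+ h :> R by rewrite -natrX ler_nat ltnW // ltn_expl.
have hsq : h%:R ^+ 2 + 1 <= 2 ^+ h + h%:R :> R.
  by rewrite -!natrX -natrD natr1 ler_nat -mulnn sqn_lt_exp2Dn.
split=> //.
  apply: le_trans (ler_wpM2l (ltW b_gt0) hsq) _.
  rewrite mulrDr [beta * _]mulrC -C_eq.
  have : C * (1 - h%:R * beta) < 1 - h%:R * beta by rewrite gtr_pMl // subr_gt0.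
  lra.
rewrite /above_threshold.
have := ler_wpM2r (ltW b_gt0) h_le; have := mulr_ge0 C_ge0 (ltW b_gt0).
move: C_eq; lra.
Qed.

End RealInequalities.

Section Insertion.
Variables (T : eqType) (h : nat) (k : 'I_h.+1) (c : T) (a : 'I_h -> T).

Definition ord_insert : 'I_h.+1 -> T :=
  fun i => if unlift k i is Some j then a j else c.

Lemma ord_insert_pivot : ord_insert k = c.
Proof. by rewrite /ord_insert unlift_none. Qed.

Lemma ord_insert_lift j : ord_insert (lift k j) = a j.
Proof. by rewrite /ord_insert liftK. Qed.

Lemma ord_insert_inj : injective a -> (forall j, a j != c) -> injective ord_insert.
Proof.
move=> a_inj a_c i i'; rewrite /ord_insert.
case: unliftP => [j ->|->]; case: unliftP => [j' ->|->] //.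
- by move/a_inj ->.
- by move=> e; move: (a_c j); rewrite e eqxx.
- by move=> e; move: (a_c j'); rewrite e eqxx.
Qed.

End Insertion.

Section Means.
Variables (R : realFieldType) (m : nat).
Implicit Types (p g : 'I_m -> R) (beta : R).

Definition mean p g := \sum_c p c * g c.

Definition cond_neq p c : 'I_m -> R :=
  fun c' => if c' == c then 0 else p c' / (1 - p c).

Lemma exists_gt0 p : \sum_c p c = 1 -> exists c, 0 < p c.
Proof.
move=> p1; case: (boolP [exists c, 0 < p c]) => [/existsP //|/existsPn p_le0].
have : \sum_c p c <= 0 by apply: sumr_le0 => c _; rewrite leNgt p_le0.
by rewrite p1 ler10.
Qed.

Lemma mean_cond_neq p g c :
  mean (cond_neq p c) g = (mean p g - p c * g c) / (1 - p c).
Proof.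
rewrite /mean (bigD1 c) //= /cond_neq eqxx mul0r add0r.
rewrite [X in (X - _) / _](bigD1 c) //= addrC addrK mulr_suml.
by apply: eq_bigr => c' /negbTE ->; rewrite mulrAC.
Qed.

Lemma cond_neq_sum1 p c : \sum_c' p c' = 1 -> p c < 1 -> \sum_c' cond_neq p c c' = 1.
Proof.
move=> p1 pc1; rewrite (bigD1 c) //= /cond_neq eqxx add0r.
rewrite (eq_bigr (fun c' => p c' / (1 - p c))) => [|c' /negbTE -> //].
rewrite -mulr_suml; move: p1; rewrite (bigD1 c) //= => p1.
have -> : \sum_(i < m | i != c) p i = 1 - p c by rewrite -p1 addrC addrK.
by rewrite divff // gt_eqF // subr_gt0.
Qed.

Lemma cond_neq_bound p c beta : (forall c', 0 <= p c' <= beta) -> beta < 1 ->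
  forall c', 0 <= cond_neq p c c' <= beta / (1 - beta).
Proof.
move=> p_bd b1 c'; case/andP: (p_bd c) => pc0 pcb.
have b1' : 0 < 1 - beta by rewrite subr_gt0.
have b0 : 0 <= beta := le_trans pc0 pcb.
have bb1 : 0 <= beta / (1 - beta) by rewrite divr_ge0 // ltW.
rewrite /cond_neq; case: eqP => _; first by rewrite lexx.
case/andP: (p_bd c') => pc'0 pc'b.
have pc1 : 0 < 1 - p c by rewrite subr_gt0 (le_lt_trans pcb).
rewrite divr_ge0 ?(ltW pc1) //= ler_pdivlMr // mulrAC ler_pdivrMr //.
by rewrite !mulrBr !mulr1; nra.
Qed.

Lemma cond_neq_gt0 p c c' : 0 < 1 - p c -> 0 < cond_neq p c c' -> c' != c /\ 0 < p c'.
Proof.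
rewrite /cond_neq => pc1; case: eqP => [_|/eqP c'c]; first by rewrite ltxx.
by rewrite pmulr_lgt0 ?invr_gt0.
Qed.

End Means.

Section DistinctChoiceStep.
Variables (R : realFieldType) (m h : nat) (beta : R).
Variables (p : 'I_m -> R) (f : 'I_h.+1 -> 'I_m -> R).
Hypotheses (p_bd : forall c, 0 <= p c <= beta) (p_sum1 : \sum_c p c = 1).
Hypothesis (f01 : forall j c, 0 <= f j c <= 1).
Hypothesis beta_h : beta * (h.+1%:R ^+ 2 + 1) <= 1.
Hypothesis f_thr : forall j, above_threshold h.+1 beta (mean p (f j)).
Variables (k : 'I_h.+1) (c : 'I_m).
Let ratio j c' := f j c' / mean p (f j).
Hypotheses (pc_gt0 : 0 < p c) (ratio_max : forall j c', 0 < p c' -> ratio j c' <= ratio k c).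

Let r := ratio k c.
Let pi j := p c * f j c / mean p (f j).

Let beta_gt0 : 0 < beta.
Proof. by case/andP: (p_bd c) => _; apply: lt_le_trans pc_gt0. Qed.

Let beta_h1 : beta * h.+1%:R < 1 := sqS_bound_mulS_lt1 (ltW beta_gt0) beta_h.

Let mean_ge j : h.+1%:R * beta <= mean p (f j).
Proof.
apply: above_threshold_ge (ltW beta_gt0) _ (f_thr j).
by apply: le_lt_trans beta_h1; rewrite ler_pM2l // ler_nat.
Qed.

Let mean_gt0 j : 0 < mean p (f j).
Proof. by apply: lt_le_trans (mean_ge j); rewrite mulr_gt0. Qed.

Let ratio_ge1 : 1 <= r.
Proof.
rewrite /r /ratio ler_pdivlMr // mul1r.
rewrite -[f k c]mul1r -p_sum1 mulr_suml; apply: ler_sum => c' _.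
case/andP: (p_bd c'); rewrite le0r => /orP[/eqP -> _|pc' _]; first by rewrite !mul0r.
apply: ler_wpM2l; first exact: ltW.
have mk : 0 < (mean p (f k))^-1 by rewrite invr_gt0.
by rewrite -(ler_pM2r mk); apply: ratio_max.
Qed.

Let pi_bound j : 0 <= pi j <= r * p c.
Proof.
have -> : pi j = p c * ratio j c by rewrite /pi /ratio mulrA.
have ratio_ge0 : 0 <= ratio j c by case/andP: (f01 j c) => f0 _; rewrite divr_ge0 // ltW.
rewrite mulr_ge0 ?(ltW pc_gt0) //= mulrC ler_wpM2r ?(ltW pc_gt0) //.
exact: ratio_max.
Qed.

Let pi_small j : pi j * h.+1%:R <= 1.
Proof.
rewrite /pi mulrAC ler_pdivrMr // mul1r; apply: le_trans (mean_ge j).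
rewrite [X in _ <= X]mulrC ler_wpM2r //.
case/andP: (p_bd c) => pc0 pcb; case/andP: (f01 j c) => f0 f1.
by apply: le_trans pcb; rewrite ler_piMr.
Qed.

Let sum_pi_lift : r * p c + \sum_(j < h) pi (lift k j) <= 1.
Proof.
have pik : pi k = r * p c by rewrite /pi /r /ratio [RHS]mulrC mulrA.
have sum_le1 : \sum_(j < h.+1) pi j <= 1.
  have H0 : (0 : R) < h.+1%:R by rewrite ltr0n.
  rewrite -(ler_pM2r H0) mul1r mulr_suml.
  apply: le_trans (_ : _ <= \sum_(j < h.+1) 1) _; last by rewrite sumr_const card_ord.
  by apply: ler_sum => j _; apply: pi_small.
by move: sum_le1; rewrite (bigD1_ord k) //= pik.
Qed.

Let expr_onesub_pivot_le : (1 - p c) ^+ h <= r * \prod_(j < h) (1 - pi (lift k j)).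
Proof.
apply: expr_onesub_le_mul_prod => //.
case/andP: (p_bd c) => _ pcb; apply: le_trans beta_h.
apply: le_trans (ler_wpM2r (exprn_ge0 _ (ler0n _ _)) pcb) _.
by rewrite ler_pM2l // lerDl.
Qed.

Lemma cond_neq_threshold j :
  above_threshold h (beta / (1 - beta)) (mean (cond_neq p c) (f (lift k j))).
Proof. by rewrite mean_cond_neq; apply: above_threshold_delete. Qed.

Lemma prod_mean_le_insert (a : 'I_h -> 'I_m) :
  \prod_(j < h) mean (cond_neq p c) (f (lift k j)) <= \prod_(j < h) f (lift k j) (a j) ->
  \prod_(i < h.+1) mean p (f i) <= \prod_(i < h.+1) f i (ord_insert k c a i).
Proof.
have pc1 : 0 < 1 - p c.
  case/andP: (p_bd c) => _ pcb; rewrite subr_gt0 (le_lt_trans pcb) //.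
  by apply: le_lt_trans beta_h1; rewrite ler_peMr ?ler1n // ltW.
have D0 : 0 < (1 - p c) ^+ h by rewrite exprn_gt0.
have prod_cond : \prod_(j < h) mean (cond_neq p c) (f (lift k j)) =
    (\prod_(j < h) mean p (f (lift k j))) * (\prod_(j < h) (1 - pi (lift k j)))
    / (1 - p c) ^+ h.
  rewrite -[h in _ ^+ h]card_ord -prodr_const -big_split -prodf_div.
  apply: eq_bigr => j _ /=.
  by rewrite mean_cond_neq /pi mulrBr mulr1 [mean _ _ * _]mulrC divfK // gt_eqF.
rewrite prod_cond => le_a.
rewrite (bigD1_ord k) //= [X in _ <= X](bigD1_ord k) //= ord_insert_pivot.
under [X in _ <= _ * X]eq_bigr do rewrite ord_insert_lift.
have fkc : f k c = r * mean p (f k) by rewrite /r /ratio divfK // gt_eqF.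
have M0 : 0 <= \prod_(j < h) mean p (f (lift k j)) by apply: prodr_ge0 => j _; apply: ltW.
have r0 : 0 <= r := le_trans ler01 ratio_ge1.
rewrite fkc [r * _]mulrC -mulrA; apply: ler_wpM2l; first exact: ltW.
apply: le_trans (ler_wpM2l r0 le_a).
by rewrite mulrA ler_pdivlMr // mulrCA ler_wpM2l.
Qed.

End DistinctChoiceStep.

Lemma exists_distinct_choice (R : realFieldType) (m h : nat) (beta : R)
    (p : 'I_m -> R) (f : 'I_h -> 'I_m -> R) :
  (forall c, 0 <= p c <= beta) -> \sum_c p c = 1 -> (forall j c, 0 <= f j c <= 1) ->
  beta * (h%:R ^+ 2 + 1) <= 1 -> (forall j, above_threshold h beta (mean p (f j))) ->
  exists2 a : 'I_h -> 'I_m, injective a /\ (forall j, 0 < p (a j))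
    & \prod_j mean p (f j) <= \prod_j f j (a j).
Proof.
elim: h beta p f => [|h IH] beta p f p_bd p1 f01 beta_h f_thr.
  have [c _] := exists_gt0 p1.
  by exists (fun => c); [split=> [[] | []] | rewrite !big_ord0].
have [c0 pc0] := exists_gt0 p1.
pose ratio (kc : 'I_h.+1 * 'I_m) := f kc.1 kc.2 / mean p (f kc.1).
case: (@arg_maxP _ _ _ (ord0, c0) (fun kc => 0 < p kc.2) ratio pc0) => -[k c] /= pc max_kc.
have ratio_max j c' : 0 < p c' -> ratio (j, c') <= ratio (k, c) by move/(max_kc (j, c')).
have b0 : 0 <= beta by case/andP: (p_bd c) => /le_trans; apply.
have b1 : beta < 1.
  by apply: le_lt_trans (sqS_bound_mulS_lt1 b0 beta_h); rewrite ler_peMr // ler1n.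
have pc_lt1 : p c < 1 by case/andP: (p_bd c) => _ /le_lt_trans; apply.
have [a [a_inj a_pos] le_a] := IH _ _ (fun j => f (lift k j))
  (cond_neq_bound c p_bd b1) (cond_neq_sum1 p1 pc_lt1) (fun j => f01 _)
  (sqS_bound_renorm b0 beta_h) (cond_neq_threshold p_bd f01 beta_h f_thr k pc).
have pc1 : 0 < 1 - p c by rewrite subr_gt0.
have a_c j : a j != c /\ 0 < p (a j) by apply: cond_neq_gt0 (a_pos j).
exists (ord_insert k c a).
  split; first by apply: ord_insert_inj => // j; case: (a_c j).
  move=> i; case: (unliftP k i) => [j ->|->]; last by rewrite ord_insert_pivot.
  by rewrite ord_insert_lift; case: (a_c j).
exact: (prod_mean_le_insert (k := k) p_bd p1 f01 beta_h f_thr pc ratio_max le_a).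
Qed.

Section ProductMeasure.
Variables (R : realFieldType) (m : nat).

Definition pcons n (a : 'I_m) (x : point m n) : point m n.+1 :=
  [ffun i => ord_insert ord0 a x i].

Definition slice n (F : {set point m n.+1}) (a : 'I_m) : {set point m n} :=
  [set x | pcons a x \in F].

Lemma pcons0 n a (x : point m n) : pcons a x ord0 = a.
Proof. by rewrite ffunE ord_insert_pivot. Qed.

Lemma pconsS n a (x : point m n) i : pcons a x (lift ord0 i) = x i.
Proof. by rewrite ffunE ord_insert_lift. Qed.

Lemma sum_point_cons n (G : point m n.+1 -> R) :
  \sum_x G x = \sum_a \sum_(x : point m n) G (pcons a x).
Proof.
rewrite pair_bigA /= (reindex (fun ax : 'I_m * point m n => pcons ax.1 ax.2)) //=.
exists (fun x : point m n.+1 => (x ord0, [ffun i => x (lift ord0 i)])) => [[a x] _|x _] /=.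
  by rewrite pcons0; congr (_, _); apply/ffunP => i; rewrite ffunE pconsS.
apply/ffunP => i; rewrite ffunE /ord_insert.
by case: unliftP => [j ->|->]; rewrite ?ffunE.
Qed.

Lemma prod_measure_cons n (nu : 'I_n.+1 -> 'I_m -> R) F :
  prod_measure nu F =
  mean (nu ord0) (fun a => prod_measure (fun i => nu (lift ord0 i)) (slice F a)).
Proof.
rewrite /prod_measure big_mkcond sum_point_cons; apply: eq_bigr => a _.
rewrite mulr_sumr [RHS]big_mkcond; apply: eq_bigr => x _.
rewrite /slice inE; case: (pcons a x \in F) => //.
by rewrite big_ord_recl pcons0; congr (_ * _); apply: eq_bigr => i _; rewrite pconsS.
Qed.

Lemma prod_measure_setT n (nu : 'I_n -> 'I_m -> R) :
  prod_measure nu [set: point m n] = \prod_i \sum_a nu i a.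
Proof. by rewrite bigA_distr_bigA; apply: eq_bigl => x; rewrite inE. Qed.

Lemma prod_measure_ge0 n (nu : 'I_n -> 'I_m -> R) F :
  (forall i a, 0 <= nu i a) -> 0 <= prod_measure nu F.
Proof. by move=> nu0; apply: sumr_ge0 => x _; apply: prodr_ge0. Qed.

Lemma prod_measure_le1 n (nu : 'I_n -> 'I_m -> R) F :
  is_prob_marginals nu -> prod_measure nu F <= 1.
Proof.
move=> nu_prob; have nu0 i a : 0 <= nu i a by case: (nu_prob i).
apply: (@le_trans _ _ (prod_measure nu setT)).
  rewrite /prod_measure [X in _ <= X]big_mkcond [X in X <= _]big_mkcond.
  apply: ler_sum => x _; rewrite inE; case: (x \in F) => //.
  exact: prodr_ge0.
by rewrite prod_measure_setT big1 // => i _; case: (nu_prob i).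
Qed.

Lemma cross_matching_dim0 h (F : 'I_h -> {set point m 0}) :
  (forall j, exists x, x \in F j) -> cross_matching F.
Proof. by move=> /fin_all_exists[x Fx]; exists x; split=> // j j' _ []. Qed.

Lemma cross_matching_slices n h (F : 'I_h -> {set point m n.+1}) (a : 'I_h -> 'I_m) :
  injective a -> cross_matching (fun j => slice (F j) (a j)) -> cross_matching F.
Proof.
move=> a_inj [y [y_in y_disj]].
exists (fun j => pcons (a j) (y j)); split=> [j|j j' jj' i]; first by move: (y_in j); rewrite inE.
case: (unliftP ord0 i) => [i' ->|->]; first by rewrite !pconsS y_disj.
by rewrite !pcons0 (inj_eq a_inj).
Qed.

End ProductMeasure.

Lemma prodr_ile1_le_factor (R : realFieldType) h (x : 'I_h -> R) j :
  (forall k, 0 <= x k <= 1) -> \prod_k x k <= x j.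
Proof.
move=> x01; rewrite (bigD1 j) //= ler_piMr //; first by case/andP: (x01 j).
by apply: prodr_ile1 => k _; apply: x01.
Qed.

Lemma cross_matching_of_prod_gt (R : realFieldType) (h m n : nat) (beta C : R)
    (nu : 'I_n -> 'I_m -> R) (F : 'I_h -> {set point m n}) :
  0 <= beta -> beta * (h%:R ^+ 2 + 1) <= 1 -> 0 <= C -> above_threshold h beta C ->
  is_prob_marginals nu -> (forall i x, nu i x <= beta) ->
  C < \prod_j prod_measure nu (F j) -> cross_matching F.
Proof.
move=> b0 bh C0 C_thr; elim: n nu F => [|n IH] nu F nu_prob nu_b C_lt.
  apply: cross_matching_dim0 => j; apply/set0Pn; apply: contraTneq C_lt => Fj0.
  by rewrite (bigD1 j) //= Fj0 /prod_measure big_set0 mul0r -leNgt.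
have nu0 n' (nu' : 'I_n' -> 'I_m -> R) i a : is_prob_marginals nu' -> 0 <= nu' i a.
  by move=> /(_ i) [->].
have meas01 j : 0 <= prod_measure nu (F j) <= 1.
  by rewrite prod_measure_ge0 ?prod_measure_le1 // => i a; apply: nu0.
pose nu' i := nu (lift ord0 i).
have nu'_prob : is_prob_marginals nu' by move=> i; apply: nu_prob.
pose f j a := prod_measure nu' (slice (F j) a).
have f01 j a : 0 <= f j a <= 1.
  by rewrite prod_measure_ge0 ?prod_measure_le1 // => i b; apply: nu0.
have p_bd a : 0 <= nu ord0 a <= beta by rewrite nu_b nu0.
have f_thr j : above_threshold h beta (mean (nu ord0) (f j)).
  rewrite -prod_measure_cons; apply: above_threshold_le C_thr => //.
  exact: ltW (lt_le_trans C_lt (prodr_ile1_le_factor j meas01)).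
have [a [a_inj _] le_a] :=
  exists_distinct_choice p_bd (proj2 (nu_prob ord0)) f01 bh f_thr.
apply: (cross_matching_slices a_inj); apply: IH nu'_prob (fun i => nu_b _) _.
by apply: lt_le_trans C_lt _; under eq_bigr do rewrite prod_measure_cons.
Qed.

Unset Implicit Arguments.

Theorem lemma8p3 (R : realFieldType) (h m n : nat) (b : R)
  (nu : 'I_n -> 'I_m -> R) (F : 'I_h -> {set point m n}) :
  0 < b -> h%:R * b < m%:R ->
  is_prob_marginals nu -> balanced b nu ->
  \prod_(j < h) prod_measure nu (F j) > 2 ^+ h * b / (m%:R - h%:R * b) ->
  cross_matching F.
Proof.
move=> b_gt0 hb_lt nu_prob nu_bal prod_gt.
have m_gt0 : 0 < m%:R :> R by apply: le_lt_trans hb_lt; rewrite mulr_ge0 // ltW.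
set beta := b / m%:R; have beta_gt0 : 0 < beta by rewrite divr_gt0.
have hbeta : h%:R * beta < 1 by rewrite /beta mulrA ltr_pdivrMr // mul1r.
have C_eq : 2 ^+ h * b / (m%:R - h%:R * b) = 2 ^+ h * beta / (1 - h%:R * beta).
  by rewrite /beta; field; rewrite !gt_eqF // subr_gt0.
rewrite C_eq in prod_gt.
have C_lt1 : 2 ^+ h * beta / (1 - h%:R * beta) < 1.
  apply: lt_le_trans prod_gt _; apply: prodr_ile1 => j _.
  by rewrite prod_measure_le1 // prod_measure_ge0 // => i a; case: (nu_prob i).
have [C_ge0 beta_h C_thr] := exp2_threshold beta_gt0 hbeta C_lt1.
by apply: (cross_matching_of_prod_gt (beta := beta)) prod_gt => //; apply: ltW.
Qed.
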